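(* For every integer $w\geq 3$, $$\sum_{i=1}^{w-2}\sigma(w-i,i)=(w-1)\,\lambda(w).$$
   Context: For integers $t\geq 1$ and $n\geq 1$ let $S_n^{(t)}=\sum_{k=1}^{n}\frac{1}{(2k-1)^t}$, and for integers $s\geq 2$, $t\geq 1$ let $\sigma(s,t)=\sum_{n\geq 1}\frac{S_n^{(t)}}{n^s}$. For real $s>1$, $\lambda(s)=\sum_{n\geq 1}\frac{1}{(2n-1)^s}=(1-2^{-s})\zeta(s)$. *)

From Stdlib Require Import Reals.
From Coquelicot Require Import Coquelicot.
Open Scope R_scope.

Definition S_odd (t n : nat) : R :=
  sum_n_m (fun k => / (2 * INR k - 1) ^ t) 1 n.

(* sigma(s,t) = sum_{n>=1} S_n^{(t)} / n^s ; Coquelicot's Series starts at 0,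
   so index shift n -> n+1. *)
Definition sigma_odd (s t : nat) : R :=
  Series (fun n => S_odd t (S n) / (INR (S n)) ^ s).

Definition lambda (s : nat) : R :=
  Series (fun n => / (2 * INR (S n) - 1) ^ s).

From Stdlib Require Import Reals Arith Lra Lia.
From Coquelicot Require Import Coquelicot.
Open Scope R_scope.

(* Write m = 2k - 1.  Summing the geometric progression 1 / (m^i n^(w-i)) over i and
   splitting into partial fractions, the (n, k) term of the double series is
     [n = m] (w-1)/n^w  +  1/(n^(w-1) (m - n))  +  m^(1-w) (1/(n - m) - 1/n).
   For fixed n the middle terms cancel under k |-> n + 1 - k, and the first ones add up to
   (w-1)/n^w for odd n, i.e. to (w-1) times the partial sums of lambda(w).  The remaining
   error is sum_k m^(1-w) c_N(k) with c_N(k) = sum_(n=k..N) (1/(n - m) - 1/n), a difference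
   of harmonic numbers: it is O(m/N) for small m and at most H_N otherwise, so the error is
   O(H_N / N) -> 0.  All series involved have nonnegative terms, so the finite sum of the
   sigma's is the sum of the combined series. *)

Lemma sum_n_m_le_loc (f g : nat -> R) a b :
  (forall k, (a <= k <= b)%nat -> f k <= g k) -> sum_n_m f a b <= sum_n_m g a b.
Proof.
  intros Hfg.
  rewrite (sum_n_m_ext_loc f (fun k => if andb (a <=? k)%nat (k <=? b)%nat then f k else g k)).
  - apply sum_n_m_le. intros k.
    destruct (Nat.leb_spec a k), (Nat.leb_spec k b); simpl; try lra; apply Hfg; lia.
  - intros k Hk. destruct (Nat.leb_spec a k), (Nat.leb_spec k b); simpl; lia || reflexivity.
Qed.

Lemma sum_n_m_nonneg (f : nat -> R) a b :
  (forall k, (a <= k <= b)%nat -> 0 <= f k) -> 0 <= sum_n_m f a b.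
Proof.
  intros Hf.
  replace 0 with (sum_n_m (fun _ => 0) a b) at 1
    by apply (@sum_n_m_const_zero R_AbelianMonoid).
  exact (sum_n_m_le_loc _ _ a b Hf).
Qed.

Lemma sum_n_m_zero_loc (f : nat -> R) a b :
  (forall k, (a <= k <= b)%nat -> f k = 0) -> sum_n_m f a b = 0.
Proof.
  intros Hf. rewrite (sum_n_m_ext_loc f (fun _ => zero)) by exact Hf.
  apply (@sum_n_m_const_zero R_AbelianMonoid).
Qed.

Lemma sum_n_m_single (f : nat -> R) a b j : (a <= j <= b)%nat ->
  (forall k, (a <= k <= b)%nat -> k <> j -> f k = 0) -> sum_n_m f a b = f j.
Proof.
  intros Hj Hf.
  rewrite (sum_n_m_Chasles f a j b) by lia.
  rewrite (sum_n_m_zero_loc f (S j) b) by (intros k Hk; apply Hf; lia).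
  destruct (Nat.eq_dec a j) as [<-|Haj].
  - rewrite sum_n_n. apply Rplus_0_r.
  - destruct j as [|j]; [lia|].
    rewrite sum_n_Sm by lia.
    rewrite (sum_n_m_zero_loc f a j) by (intros k Hk; apply Hf; lia).
    change (0 + f (S j) + 0 = f (S j)). ring.
Qed.

Lemma sum_n_m_ge_term (f : nat -> R) a b j : (a <= j <= b)%nat ->
  (forall k, (a <= k <= b)%nat -> 0 <= f k) -> f j <= sum_n_m f a b.
Proof.
  intros Hj Hf.
  set (fj := fun k => if Nat.eq_dec k j then f j else 0).
  assert (Hfj : sum_n_m fj a b = f j).
  { rewrite (sum_n_m_single fj a b j Hj).
    - unfold fj. destruct (Nat.eq_dec j j); [reflexivity | contradiction].
    - intros k _ Hkj. unfold fj. destruct (Nat.eq_dec k j); [contradiction | reflexivity]. }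
  rewrite <- Hfj. apply sum_n_m_le_loc. intros k Hk.
  unfold fj. destruct (Nat.eq_dec k j) as [->|]; [lra | auto].
Qed.

Lemma sum_n_m_swap (f : nat -> nat -> R) a b c d :
  sum_n_m (fun i => sum_n_m (f i) c d) a b =
  sum_n_m (fun k => sum_n_m (fun i => f i k) a b) c d.
Proof.
  destruct (le_lt_dec c d) as [Hcd | Hdc].
  - induction Hcd as [|d Hcd IH].
    + rewrite sum_n_n. apply sum_n_m_ext. intros i. apply sum_n_n.
    + rewrite sum_n_Sm, <- IH by lia. rewrite <- sum_n_m_plus.
      apply sum_n_m_ext. intros i. apply sum_n_Sm. lia.
  - rewrite (sum_n_m_zero _ c d Hdc).
    apply sum_n_m_zero_loc. intros i _. exact (@sum_n_m_zero R_AbelianMonoid _ c d Hdc).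
Qed.

Lemma sum_n_m_triangle (f : nat -> nat -> R) a N :
  sum_n_m (fun n => sum_n_m (f n) a n) a N =
  sum_n_m (fun k => sum_n_m (fun n => f n k) k N) a N.
Proof.
  destruct (le_lt_dec a N) as [HaN | HNa].
  - induction HaN as [|N HaN IH].
    + rewrite !sum_n_n. reflexivity.
    + rewrite !sum_n_Sm, IH by lia. rewrite (sum_n_m_zero _ (S N) N) by lia.
      rewrite (sum_n_m_ext_loc (fun k => sum_n_m (fun n => f n k) k (S N))
                 (fun k => plus (sum_n_m (fun n => f n k) k N) (f (S N) k)))
        by (intros k Hk; rewrite sum_n_Sm by lia; reflexivity).
      rewrite sum_n_m_plus, plus_zero_l. apply plus_assoc.
  - rewrite !sum_n_m_zero by exact HNa. reflexivity.
Qed.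

Lemma sum_n_m_reflect (f : nat -> R) a b :
  sum_n_m f a b = sum_n_m (fun k => f (a + b - k)%nat) a b.
Proof.
  destruct (le_lt_dec a b) as [Hab | Hba].
  - induction Hab as [|b Hab IH].
    + rewrite !sum_n_n. f_equal. lia.
    + rewrite sum_n_Sm, IH by lia.
      rewrite (sum_Sn_m (fun k => f (a + S b - k)%nat)) by lia. rewrite <- sum_n_m_S.
      replace (a + S b - a)%nat with (S b) by lia.
      rewrite (sum_n_m_ext_loc (fun k => f (a + S b - S k)%nat) (fun k => f (a + b - k)%nat))
        by (intros k Hk; f_equal; lia).
      apply plus_comm.
  - rewrite !sum_n_m_zero by exact Hba. reflexivity.
Qed.

Lemma sum_n_m_opp (f : nat -> R) a b : sum_n_m (fun k => - f k) a b = - sum_n_m f a b.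
Proof.
  rewrite (sum_n_m_ext _ (fun k => mult (opp one) (f k)))
    by (intros k; apply (opp_mult_m1 (K := R_Ring))).
  rewrite (sum_n_m_mult_l (K := R_Ring)). symmetry. apply (opp_mult_m1 (K := R_Ring)).
Qed.

Lemma sum_n_m_antisym (f : nat -> R) a b :
  (forall k, (a <= k <= b)%nat -> f (a + b - k)%nat = - f k) -> sum_n_m f a b = 0.
Proof.
  intros Hf.
  assert (Hneg : sum_n_m f a b = - sum_n_m f a b).
  { rewrite sum_n_m_reflect at 1. rewrite <- sum_n_m_opp. apply sum_n_m_ext_loc, Hf. }
  lra.
Qed.

Lemma sum_n_m_telescope (v : nat -> R) a b : (a <= b)%nat ->
  sum_n_m (fun i => v i - v (S i)) a b = v a - v (S b).
Proof.
  induction 1 as [|b Hab IH].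
  - rewrite sum_n_n. reflexivity.
  - rewrite sum_n_Sm, IH by lia.
    change (v a - v (S b) + (v (S b) - v (S (S b))) = v a - v (S (S b))). ring.
Qed.

Lemma is_series_sum_n_m (u : nat -> nat -> R) (l : nat -> R) lo hi : (lo <= hi)%nat ->
  (forall i, (lo <= i <= hi)%nat -> is_series (u i) (l i)) ->
  is_series (fun n => sum_n_m (fun i => u i n) lo hi) (sum_n_m l lo hi).
Proof.
  induction 1 as [|hi Hhi IH]; intros Hu.
  - rewrite sum_n_n. apply (is_series_ext (u lo)).
    + intros n. rewrite sum_n_n. reflexivity.
    + apply Hu. lia.
  - rewrite sum_n_Sm by lia.
    apply (is_series_ext (fun n => plus (sum_n_m (fun i => u i n) lo hi) (u (S hi) n))).
    + intros n. rewrite sum_n_Sm by lia. reflexivity.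
    + apply (is_series_plus (V := R_NormedModule)).
      * apply IH. intros i Hi. apply Hu. lia.
      * apply Hu. lia.
Qed.

Lemma Series_sum_n_m_nonneg (u : nat -> nat -> R) lo hi (L : R) : (lo <= hi)%nat ->
  (forall i n, 0 <= u i n) ->
  is_series (fun n => sum_n_m (fun i => u i n) lo hi) L ->
  sum_n_m (fun i => Series (u i)) lo hi = L.
Proof.
  intros Hlh Hu HL.
  assert (Hex : forall i, (lo <= i <= hi)%nat -> ex_series (u i)).
  { intros i Hi.
    apply (ex_series_le (V := R_CompleteNormedModule) _ (fun n => sum_n_m (fun j => u j n) lo hi)).
    - intros n. change (Rabs (u i n) <= sum_n_m (fun j => u j n) lo hi).
      rewrite (Rabs_pos_eq _ (Hu i n)).
      apply (sum_n_m_ge_term (fun j => u j n) lo hi i Hi). intros; apply Hu.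
    - exists L. exact HL. }
  rewrite <- (is_series_unique _ _ HL). symmetry. apply is_series_unique.
  apply is_series_sum_n_m; [exact Hlh |].
  intros i Hi. apply Series_correct, Hex, Hi.
Qed.

Definition harmonic (n : nat) : R := sum_n_m (fun i => / INR i) 1 n.

Lemma harmonic_0 : harmonic 0 = 0.
Proof. apply (@sum_n_m_zero R_AbelianMonoid). lia. Qed.

Lemma harmonic_S n : harmonic (S n) = harmonic n + / INR (S n).
Proof. unfold harmonic. rewrite sum_n_Sm by lia. reflexivity. Qed.

Lemma harmonic_le a b : (a <= b)%nat -> harmonic a <= harmonic b.
Proof.
  induction 1 as [|b Hab IH]; [lra |].
  rewrite harmonic_S. pose proof (RinvN_pos b). rewrite S_INR. lra.
Qed.

Lemma harmonic_nonneg n : 0 <= harmonic n.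
Proof. rewrite <- harmonic_0. apply harmonic_le. lia. Qed.

Lemma harmonic_add_sub_le a b : harmonic (a + b) - harmonic a <= INR b / INR (S a).
Proof.
  induction b as [|b IH].
  - rewrite Nat.add_0_r. unfold Rdiv. simpl. lra.
  - rewrite Nat.add_succ_r, harmonic_S, (S_INR b).
    assert (/ INR (S (a + b)) <= / INR (S a)).
    { apply Rinv_le_contravar; [apply lt_0_INR | apply le_INR]; lia. }
    replace ((INR b + 1) / INR (S a)) with (INR b / INR (S a) + / INR (S a))
      by (unfold Rdiv; ring).
    lra.
Qed.

Lemma is_lim_seq_harmonic_div : is_lim_seq (fun n => harmonic n / INR n) 0.
Proof.
  assert (Hinv : is_lim_seq (fun k => / INR (S k)) 0).
  { apply (is_lim_seq_incr_1 (fun k => / INR k)).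
    replace (Finite 0) with (Rbar_inv p_infty) by reflexivity.
    apply is_lim_seq_inv; [apply is_lim_seq_INR | discriminate]. }
  apply is_lim_seq_Reals in Hinv. apply Cesaro_1 in Hinv. apply is_lim_seq_Reals in Hinv.
  apply (is_lim_seq_ext_loc (fun n => sum_f_R0 (fun k => / INR (S k)) (pred n) / INR n));
    [| exact Hinv].
  exists 1%nat. intros [|n] Hn; [lia |]. simpl pred. f_equal.
  rewrite <- sum_n_Reals. unfold harmonic, sum_n.
  rewrite <- (sum_n_m_S (fun i => / INR i)). reflexivity.
Qed.

Definition oddr (k : nat) : R := 2 * INR k - 1.

Lemma INR_odd k : (1 <= k)%nat -> INR (2 * k - 1) = oddr k.
Proof. intros Hk. unfold oddr. rewrite minus_INR, mult_INR by lia. reflexivity. Qed.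

Lemma oddr_ge k : (1 <= k)%nat -> 1 <= INR k <= oddr k.
Proof. intros Hk. apply le_INR in Hk. unfold oddr. simpl in Hk. lra. Qed.

Lemma S_odd_nonneg t n : 0 <= S_odd t n.
Proof.
  apply sum_n_m_nonneg. intros k Hk. pose proof (oddr_ge k ltac:(lia)).
  apply Rlt_le, Rinv_0_lt_compat, pow_lt. unfold oddr in *. lra.
Qed.

(* H_(a-b) if b <= a, else H_(b-a-1): its increment in [a] is 1/(a+1-b), also at
   a+1 = b because [/ 0 = 0]. *)
Definition harmonic_dist (a b : nat) : R :=
  if (b <=? a)%nat then harmonic (a - b) else harmonic (b - S a).

Lemma harmonic_dist_S a b :
  harmonic_dist (S a) b = harmonic_dist a b + / (INR (S a) - INR b).
Proof.
  unfold harmonic_dist.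
  destruct (Nat.leb_spec b a), (Nat.leb_spec b (S a)); try lia.
  - replace (S a - b)%nat with (S (a - b)) by lia.
    rewrite harmonic_S, S_INR, S_INR, minus_INR by lia. f_equal. f_equal. ring.
  - replace b with (S a) by lia. rewrite Nat.sub_diag, Rminus_diag, Rinv_0.
    replace (S a - S a)%nat with 0%nat by lia. ring.
  - replace (b - S a)%nat with (S (b - S (S a))) by lia.
    rewrite harmonic_S.
    replace (INR (S a) - INR b) with (- INR (S (b - S (S a)))).
    + rewrite Rinv_opp. ring.
    + rewrite S_INR, minus_INR by lia. rewrite !S_INR. ring.
Qed.

(* At the pole n = 2k - 1 this is -1/n, since [/ 0 = 0]. *)
Definition inv_shift_diff (n k : nat) : R := / (INR n - oddr k) - / INR n.

Definition column_sum (N k : nat) : R := sum_n_m (fun n => inv_shift_diff n k) k N.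

Lemma column_sum_closed N k : (1 <= k)%nat -> (pred k <= N)%nat ->
  column_sum N k = harmonic_dist N (2 * k - 1) - harmonic N.
Proof.
  intros Hk. induction 1 as [|N HN IH].
  - unfold column_sum, harmonic_dist. rewrite sum_n_m_zero by lia.
    destruct (Nat.leb_spec (2 * k - 1) (pred k)); [lia |].
    replace (2 * k - 1 - S (pred k))%nat with (pred k) by lia. change zero with 0. ring.
  - unfold column_sum in *. rewrite sum_n_Sm, IH by lia.
    rewrite harmonic_dist_S, harmonic_S, INR_odd by exact Hk.
    unfold inv_shift_diff. change (plus ?x ?y) with (x + y). ring.
Qed.

Lemma column_sum_bounds N k : (1 <= k <= N)%nat ->
  0 <= - column_sum N k <= harmonic N /\
  (2 * oddr k <= INR N + 1 -> - column_sum N k <= 2 * oddr k / INR N).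
Proof.
  intros Hk. rewrite column_sum_closed by lia. unfold harmonic_dist.
  assert (HN : 1 <= INR N) by (apply (le_INR 1); lia).
  pose proof (oddr_ge k ltac:(lia)) as Hm.
  rewrite <- (INR_odd k) in * by lia.
  destruct (Nat.leb_spec (2 * k - 1) N) as [HmN | HNm].
  - pose proof (harmonic_le (N - (2 * k - 1)) N ltac:(lia)).
    pose proof (harmonic_nonneg (N - (2 * k - 1))).
    split; [lra |]. intros Hsmall.
    pose proof (harmonic_add_sub_le (N - (2 * k - 1)) (2 * k - 1)) as Hd.
    replace (N - (2 * k - 1) + (2 * k - 1))%nat with N in Hd by lia.
    rewrite S_INR, (minus_INR N) in Hd by exact HmN.
    apply (Rle_trans _ (INR (2 * k - 1) / (INR N - INR (2 * k - 1) + 1))); [lra |].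
    replace (2 * INR (2 * k - 1) / INR N) with (INR (2 * k - 1) / (INR N / 2))
      by (field; lra).
    apply Rmult_le_compat_l; [lra |]. apply Rinv_le_contravar; lra.
  - pose proof (harmonic_le (2 * k - 1 - S N) N ltac:(lia)).
    pose proof (harmonic_nonneg (2 * k - 1 - S N)).
    split; [lra |]. intros Hsmall. apply lt_INR in HNm. lra.
Qed.

Lemma sum_inv_oddr_sub n : sum_n_m (fun k => / (oddr k - INR n)) 1 n = 0.
Proof.
  apply sum_n_m_antisym. intros k Hk.
  unfold oddr. rewrite minus_INR, plus_INR by lia. simpl INR.
  rewrite <- Rinv_opp. f_equal. ring.
Qed.

Lemma sum_odd_indicator (x : R) n :
  sum_n_m (fun k => if (n =? 2 * k - 1)%nat then x else 0) 1 n = if Nat.odd n then x else 0.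
Proof.
  destruct (Nat.odd n) eqn:Hodd.
  - apply Nat.odd_spec in Hodd as [t ->].
    rewrite (sum_n_m_single _ 1 (2 * t + 1) (S t)); [| lia |].
    + rewrite (proj2 (Nat.eqb_eq _ _)) by lia. reflexivity.
    + intros k Hk Hkt. rewrite (proj2 (Nat.eqb_neq _ _)) by lia. reflexivity.
  - apply sum_n_m_zero_loc. intros k Hk.
    destruct (Nat.eqb_spec n (2 * k - 1)) as [Hn | _]; [| reflexivity].
    assert (Nat.odd n = true) by (apply Nat.odd_spec; exists (pred k); lia).
    congruence.
Qed.

Section Sum_formula.

Variable w : nat.
Hypothesis w_ge3 : (3 <= w)%nat.

Definition weight (k : nat) : R := / oddr k ^ (w - 1).

Lemma geometric_telescope (x y : R) : x <> 0 -> y <> 0 ->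
  (x - y) * sum_n_m (fun i => / x ^ i / y ^ (w - i)) 1 (w - 2) =
  / y ^ (w - 1) - / (x ^ (w - 2) * y).
Proof.
  intros Hx Hy.
  transitivity (sum_n_m (fun i => (x - y) * (/ x ^ i / y ^ (w - i))) 1 (w - 2)).
  { symmetry. apply (sum_n_m_mult_l (K := R_Ring)). }
  rewrite (sum_n_m_ext_loc _
             (fun i => / x ^ pred i / y ^ (w - i) - / x ^ pred (S i) / y ^ (w - S i))).
  - rewrite sum_n_m_telescope by lia.
    replace (w - S (w - 2))%nat with 1%nat by lia. simpl pred.
    replace (S (w - 3)) with (w - 2)%nat by lia.
    rewrite pow_O, pow_1.
    assert (x ^ (w - 2) <> 0) by (apply pow_nonzero, Hx).
    assert (y ^ (w - 1) <> 0) by (apply pow_nonzero, Hy).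
    field. tauto.
  - intros i Hi. destruct i as [|j]; [lia |]. simpl pred.
    replace (w - S j)%nat with (S (w - S (S j))) by lia. simpl pow.
    assert (x ^ j <> 0) by (apply pow_nonzero, Hx).
    assert (y ^ (w - S (S j)) <> 0) by (apply pow_nonzero, Hy).
    simpl. field. tauto.
Qed.

Definition pair_sum (n k : nat) : R :=
  sum_n_m (fun i => / oddr k ^ i / INR n ^ (w - i)) 1 (w - 2).

Lemma pair_decomposition n k : (1 <= n)%nat -> (1 <= k)%nat ->
  pair_sum n k =
  (if (n =? 2 * k - 1)%nat then INR (w - 1) / INR n ^ w else 0) +
  / INR n ^ (w - 1) * / (oddr k - INR n) + weight k * inv_shift_diff n k.
Proof.
  intros Hn Hk.
  pose proof (oddr_ge k Hk) as Hm. assert (Hnr : 1 <= INR n) by (apply (le_INR 1); lia).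
  unfold pair_sum, weight, inv_shift_diff.
  replace (w - 1)%nat with (S (w - 2)) by lia.
  destruct (Nat.eqb_spec n (2 * k - 1)) as [Hnm | Hnm].
  - assert (Hx : oddr k = INR n) by (rewrite Hnm; symmetry; apply INR_odd, Hk).
    rewrite Hx, !Rminus_diag, Rinv_0.
    transitivity (INR (w - 2) * / INR n ^ w).
    + rewrite (sum_n_m_ext_loc _ (fun _ => / INR n ^ w)), sum_n_m_const.
      * f_equal. f_equal. lia.
      * intros i Hi. simpl. unfold Rdiv. rewrite <- Rinv_mult, <- pow_add.
        replace (i + (w - i))%nat with w by lia. reflexivity.
    + replace (INR n ^ w) with (INR n ^ S (w - 2) * INR n) by
        (rewrite <- (pow_1 (INR n)) at 2; rewrite <- pow_add; f_equal; lia).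
      rewrite S_INR. field. repeat split; try apply pow_nonzero; lra.
  - assert (Hx : oddr k <> INR n).
    { intros Hx. apply Hnm, INR_eq. rewrite INR_odd; [symmetry; exact Hx | exact Hk]. }
    pose proof (geometric_telescope (oddr k) (INR n) ltac:(lra) ltac:(lra)) as Hg.
    replace (w - 1)%nat with (S (w - 2)) in Hg by lia.
    apply (Rmult_eq_reg_l (oddr k - INR n)); [| lra]. rewrite Hg. simpl pow.
    assert (oddr k ^ (w - 2) <> 0) by (apply pow_nonzero; lra).
    assert (INR n ^ (w - 2) <> 0) by (apply pow_nonzero; lra).
    field. repeat split; lra.
Qed.

Definition odd_term (n : nat) : R := if Nat.odd n then INR (w - 1) / INR n ^ w else 0.

Definition summand (n : nat) : R :=
  sum_n_m (fun i => S_odd i n / INR n ^ (w - i)) 1 (w - 2).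

Lemma summand_decomposition n : (1 <= n)%nat ->
  summand n = odd_term n + sum_n_m (fun k => weight k * inv_shift_diff n k) 1 n.
Proof.
  intros Hn.
  transitivity (sum_n_m (pair_sum n) 1 n).
  { unfold summand, pair_sum. rewrite <- sum_n_m_swap.
    apply sum_n_m_ext. intros i. symmetry. apply (sum_n_m_mult_r (K := R_Ring)). }
  rewrite (sum_n_m_ext_loc _ (fun k => plus (plus
             (if (n =? 2 * k - 1)%nat then INR (w - 1) / INR n ^ w else 0)
             (/ INR n ^ (w - 1) * / (oddr k - INR n))) (weight k * inv_shift_diff n k)))
    by (intros k Hk; apply pair_decomposition; lia).
  rewrite !sum_n_m_plus, sum_odd_indicator, (sum_n_m_mult_l (K := R_Ring)), sum_inv_oddr_sub.
  set (E := sum_n_m (fun k => weight k * inv_shift_diff n k) 1 n).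
  change (odd_term n + / INR n ^ (w - 1) * 0 + E = odd_term n + E). ring.
Qed.

Definition column_error (N : nat) : R :=
  sum_n_m (fun k => weight k * column_sum N k) 1 N.

Lemma sum_summand N :
  sum_n_m summand 1 N = sum_n_m odd_term 1 N + column_error N.
Proof.
  rewrite (sum_n_m_ext_loc _ (fun n =>
             plus (odd_term n) (sum_n_m (fun k => weight k * inv_shift_diff n k) 1 n)))
    by (intros n Hn; apply summand_decomposition; lia).
  rewrite sum_n_m_plus. apply Rplus_eq_compat_l. unfold column_error, column_sum.
  rewrite sum_n_m_triangle. apply sum_n_m_ext. intros k.
  apply (sum_n_m_mult_l (K := R_Ring)).
Qed.

Lemma weight_bounds k : (1 <= k)%nat -> 0 < weight k <= / oddr k ^ 2.
Proof.
  intros Hk. pose proof (oddr_ge k Hk). unfold weight. split.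
  - apply Rinv_0_lt_compat, pow_lt. lra.
  - apply Rinv_le_contravar; [apply pow_lt; lra |]. apply Rle_pow; [lra | lia].
Qed.

Lemma weighted_column_sum_bound N k : (1 <= k <= N)%nat ->
  0 <= - (weight k * column_sum N k) <= 2 / INR N * / INR k + 4 * harmonic N / INR N ^ 2.
Proof.
  intros Hk.
  destruct (column_sum_bounds N k Hk) as [[HX0 HXH] HXsmall].
  destruct (weight_bounds k ltac:(lia)) as [HG0 HGm].
  pose proof (oddr_ge k ltac:(lia)) as Hm.
  assert (HN : 1 <= INR N) by (apply (le_INR 1); lia).
  pose proof (harmonic_nonneg N) as HH.
  set (X := - column_sum N k) in *. set (m := oddr k) in *.
  rewrite Ropp_mult_distr_r. fold X.
  assert (Hfirst : 0 <= 2 / INR N * / INR k) by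
    (apply Rmult_le_pos; apply Rlt_le; [apply Rdiv_lt_0_compat | apply Rinv_0_lt_compat]; lra).
  assert (Hsecond : 0 <= 4 * harmonic N / INR N ^ 2) by
    (apply Rmult_le_pos; [lra | apply Rlt_le, Rinv_0_lt_compat, pow_lt; lra]).
  split; [apply Rmult_le_pos; lra |].
  destruct (Rle_lt_dec (2 * m) (INR N + 1)) as [Hsmall | Hlarge].
  - specialize (HXsmall Hsmall).
    apply (Rle_trans _ (/ m ^ 2 * (2 * m / INR N))); [apply Rmult_le_compat; auto; lra |].
    replace (/ m ^ 2 * (2 * m / INR N)) with (2 / INR N * / m) by (field; lra).
    enough (2 / INR N * / m <= 2 / INR N * / INR k) by lra.
    apply Rmult_le_compat_l; [apply Rlt_le, Rdiv_lt_0_compat; lra |].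
    apply Rinv_le_contravar; lra.
  - apply (Rle_trans _ (/ m ^ 2 * harmonic N)); [apply Rmult_le_compat; lra |].
    replace (4 * harmonic N / INR N ^ 2) with (/ (INR N ^ 2 / 4) * harmonic N) by (field; lra).
    enough (/ m ^ 2 * harmonic N <= / (INR N ^ 2 / 4) * harmonic N) by lra.
    apply Rmult_le_compat_r; [exact HH |].
    apply Rinv_le_contravar; nra.
Qed.

Lemma column_error_bounds N : (1 <= N)%nat -> 0 <= - column_error N <= 6 * (harmonic N / INR N).
Proof.
  intros HN. assert (HNr : 1 <= INR N) by (apply (le_INR 1); lia).
  unfold column_error. rewrite <- sum_n_m_opp. split.
  - apply sum_n_m_nonneg. intros k Hk. apply weighted_column_sum_bound, Hk.
  - apply (Rle_trans _
      (sum_n_m (fun k => plus (2 / INR N * / INR k) (4 * harmonic N / INR N ^ 2)) 1 N)).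
    + apply sum_n_m_le_loc. intros k Hk. apply weighted_column_sum_bound, Hk.
    + rewrite sum_n_m_plus, (sum_n_m_mult_l (K := R_Ring)), sum_n_m_const.
      fold (harmonic N). replace (S N - 1)%nat with N by lia.
      right. change (2 / INR N * harmonic N + INR N * (4 * harmonic N / INR N ^ 2) =
        6 * (harmonic N / INR N)). field. lra.
Qed.

Lemma is_lim_seq_column_error : is_lim_seq (fun N => column_error (S N)) 0.
Proof.
  apply (is_lim_seq_le_le (fun N => -6 * (harmonic (S N) / INR (S N))) _ (fun _ => 0)).
  - intros N. pose proof (column_error_bounds (S N) ltac:(lia)). lra.
  - replace (Finite 0) with (Rbar_mult (-6) 0) by (simpl; f_equal; ring).
    apply is_lim_seq_scal_l.
    apply (is_lim_seq_incr_1 (fun N => harmonic N / INR N)), is_lim_seq_harmonic_div.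
  - apply is_lim_seq_const.
Qed.

Lemma sum_n_lambda_le J : sum_n (fun n => / (2 * INR (S n) - 1) ^ w) J <= 2 - / INR (S J).
Proof.
  induction J as [|J IH].
  - rewrite sum_O. simpl INR. replace (2 * 1 - 1) with 1 by ring. rewrite pow1. lra.
  - rewrite sum_Sn. change (plus ?a ?b) with (a + b).
    enough (/ (2 * INR (S (S J)) - 1) ^ w <= / INR (S J) - / INR (S (S J))) by lra.
    pose proof (pos_INR J). rewrite !S_INR.
    replace (/ (INR J + 1) - / (INR J + 1 + 1)) with (/ ((INR J + 1) * (INR J + 1 + 1)))
      by (field; lra).
    apply Rinv_le_contravar; [nra |].
    apply (Rle_trans _ ((2 * (INR J + 1 + 1) - 1) ^ 2)); [nra |].
    apply Rle_pow; [lra | lia].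
Qed.

Lemma is_series_lambda : is_series (fun n => / (2 * INR (S n) - 1) ^ w) (lambda w).
Proof.
  destruct (ex_finite_lim_seq_incr (sum_n (fun n => / (2 * INR (S n) - 1) ^ w)) 2) as [l Hl].
  - intros n. rewrite sum_Sn. change (plus ?a ?b) with (a + b).
    enough (0 < / (2 * INR (S (S n)) - 1) ^ w) by lra.
    apply Rinv_0_lt_compat, pow_lt. rewrite S_INR. pose proof (pos_INR (S n)). lra.
  - intros n. pose proof (sum_n_lambda_le n).
    assert (0 < / INR (S n)) by (apply Rinv_0_lt_compat, lt_0_INR; lia). lra.
  - unfold lambda. rewrite (is_series_unique _ _ Hl). exact Hl.
Qed.

Lemma sum_odd_term_odd J :
  sum_n_m odd_term 1 (S (2 * J)) =
  INR (w - 1) * sum_n (fun n => / (2 * INR (S n) - 1) ^ w) J.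
Proof.
  induction J as [|J IH].
  - rewrite sum_n_n, sum_O. unfold odd_term. simpl Nat.odd. cbv iota.
    simpl INR. replace (2 * 1 - 1) with 1 by ring. reflexivity.
  - replace (S (2 * S J)) with (S (S (S (2 * J)))) by lia.
    do 2 rewrite sum_n_Sm by lia. rewrite IH, sum_Sn.
    unfold odd_term. rewrite Nat.odd_succ_succ, Nat.odd_succ_succ, Nat.odd_even.
    replace (INR (S (S (S (2 * J))))) with (2 * INR (S (S J)) - 1)
      by (rewrite !S_INR, mult_INR; simpl; ring).
    rewrite <- (Nat.add_1_r (2 * J)), Nat.odd_odd.
    set (L := sum_n _ J).
    change (INR (w - 1) * L + 0 + INR (w - 1) / (2 * INR (S (S J)) - 1) ^ w =
            INR (w - 1) * (L + / (2 * INR (S (S J)) - 1) ^ w)).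
    unfold Rdiv. ring.
Qed.

Lemma is_lim_seq_sum_odd_term :
  is_lim_seq (fun N => sum_n_m odd_term 1 (S N)) (INR (w - 1) * lambda w).
Proof.
  apply (is_lim_seq_ext
           (fun N => INR (w - 1) * sum_n (fun n => / (2 * INR (S n) - 1) ^ w) (Nat.div2 N))).
  - intros N. symmetry. destruct (Nat.Even_or_Odd N) as [[J ->] | [J ->]].
    + rewrite Nat.div2_double. apply sum_odd_term_odd.
    + rewrite Nat.add_1_r, Nat.div2_succ_double, sum_n_Sm, sum_odd_term_odd by lia.
      unfold odd_term. rewrite Nat.odd_succ_succ, Nat.odd_even. apply Rplus_0_r.
  - apply (is_lim_seq_scal_l _ (INR (w - 1)) (lambda w)).
    apply (is_lim_seq_subseq (sum_n _)); [| exact is_series_lambda].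
    intros P [N HN]. exists (2 * N)%nat. intros n Hn. apply HN, Nat.div2_le_lower_bound. lia.
Qed.

Lemma is_series_summand : is_series (fun n => summand (S n)) (INR (w - 1) * lambda w).
Proof.
  change (is_lim_seq (sum_n (fun n => summand (S n))) (INR (w - 1) * lambda w)).
  apply (is_lim_seq_ext (fun N => sum_n_m odd_term 1 (S N) + column_error (S N))).
  - intros N. unfold sum_n. rewrite sum_n_m_S. symmetry. apply sum_summand.
  - replace (Finite (INR (w - 1) * lambda w)) with (Rbar_plus (INR (w - 1) * lambda w) 0)
      by (simpl; f_equal; ring).
    apply is_lim_seq_plus'; [apply is_lim_seq_sum_odd_term | apply is_lim_seq_column_error].
Qed.

End Sum_formula.

Theorem mainTheorem1 (w : nat) (hw : (3 <= w)%nat) :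
  sum_n_m (fun i => sigma_odd (w - i)%nat i) 1 (w - 2)%nat = INR (w - 1)%nat * lambda w.
Proof.
  apply (Series_sum_n_m_nonneg (fun i n => S_odd i (S n) / INR (S n) ^ (w - i))); [lia | |].
  - intros i n. apply Rmult_le_pos; [apply S_odd_nonneg |].
    apply Rlt_le, Rinv_0_lt_compat, pow_lt, lt_0_INR. lia.
  - exact (is_series_summand w hw).
Qed.
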